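(* For $\mu\in[-\pi,\pi)$ and $\rho\in[0,1)$, let $\operatorname{WC}(\mu,\rho)$ denote the wrapped Cauchy distribution on $[-\pi,\pi)$ with density $\frac{1}{2\pi}\frac{1-\rho^2}{1+\rho^2-2\rho\cos(\theta-\mu)}$. Suppose $\Theta\mid\nu\sim\operatorname{WC}(\nu,\rho_1)$ with known $\rho_1\in[0,1)$, and the prior distribution of $\nu$ is $\operatorname{WC}(\mu_2,\rho_2)$ with $\mu_2\in[-\pi,\pi)$, $\rho_2\in[0,1)$. Then for $\mu_1\in[-\pi,\pi)$, the posterior distribution of $\nu$ given $\Theta=\mu_1$ has density $$f(\nu)=C\left[\{1+\rho_1^2-2\rho_1\cos(\nu-\mu_1)\}\{1+\rho_2^2-2\rho_2\cos(\nu-\mu_2)\}\right]^{-1},\qquad -\pi\le\nu<\pi,$$ where $C=\dfrac{(1-\rho_1^2)(1-\rho_2^2)\{1+\rho_1^2\rho_2^2-2\rho_1\rho_2\cos(\mu_1-\mu_2)\}}{2\pi(1-\rho_1^2\rho_2^2)}$. *)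

From Stdlib Require Import Reals.
From Coquelicot Require Import Coquelicot.
Open Scope R_scope.

Definition wc_density (mu rho theta : R) : R :=
  / (2 * PI) * ((1 - rho ^ 2) / (1 + rho ^ 2 - 2 * rho * cos (theta - mu))).

(* Posterior density of nu given Theta = mu1 (Bayes' formula for densities):
   Theta | nu ~ WC(nu, rho1), prior nu ~ WC(mu2, rho2).
   posterior(nu) = lik(mu1 | nu) prior(nu) / int_{-pi}^{pi} lik(mu1 | v) prior(v) dv *)
Definition wc_posterior_density (rho1 mu2 rho2 mu1 nu : R) : R :=
  wc_density nu rho1 mu1 * wc_density mu2 rho2 nu /
  RInt (fun v => wc_density v rho1 mu1 * wc_density mu2 rho2 v) (- PI) PI.

(* Likelihood and prior are both (1 - r^2) / (2 pi A) with A = 1 + r^2 - 2 r cos(x - m), so the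
   posterior is proportional to 1 / (A1 A2) and everything reduces to int_{-pi}^{pi} dx / (A1 A2).
   With E = |r1 e^{i m1} - r2 e^{i m2}|^2 and D = |1 - r1 r2 e^{i (m1 - m2)}|^2, E D / (A1 A2) is a
   combination of 1 / A_i and 2 r_i sin(x - m_i) / A_i.  Over a period the first integrates to
   2 pi / (1 - r_i^2) (Poisson kernel) and the second, the derivative of ln A_i, to 0.  When E = 0
   the two kernels coincide, and 1 / A^2 is integrated through the derivative of sin(x - m) / A. *)
From Stdlib Require Import Reals Lra.
From Coquelicot Require Import Coquelicot.
Open Scope R_scope.

Definition wc_den (r m x : R) : R := 1 + r ^ 2 - 2 * r * cos (x - m).

Lemma sin_pow2_add_cos_pow2 t : sin t ^ 2 + cos t ^ 2 = 1.
Proof. rewrite <- (sin2_cos2 t); unfold Rsqr; ring. Qed.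

Lemma sin_neg_PI_sub m : sin (- PI - m) = sin (PI - m).
Proof. rewrite !sin_minus, sin_neg, cos_neg, sin_PI; ring. Qed.

Lemma cos_neg_PI_sub m : cos (- PI - m) = cos (PI - m).
Proof. rewrite !cos_minus, sin_neg, cos_neg, sin_PI; ring. Qed.

Lemma one_sub_mul_cos_pos r t : 0 <= r < 1 -> 0 < 1 - r * cos t.
Proof. intros Hr; pose proof (COS_bound t); nra. Qed.

Lemma wc_den_pos r m x : 0 <= r < 1 -> 0 < wc_den r m x.
Proof. intros Hr; unfold wc_den; pose proof (COS_bound (x - m)); nra. Qed.

Lemma wc_den_sym r m x : wc_den r m x = wc_den r x m.
Proof. unfold wc_den; rewrite <- cos_neg; f_equal; f_equal; f_equal; ring. Qed.

Lemma wc_density_eq r m x : wc_density m r x = (1 - r ^ 2) / (2 * PI) / wc_den r m x.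
Proof. unfold wc_density, wc_den, Rdiv; ring. Qed.

Lemma wc_den_neg_PI r m : wc_den r m (- PI) = wc_den r m PI.
Proof. unfold wc_den; rewrite cos_neg_PI_sub; reflexivity. Qed.

(* A continuous branch of 2 arg(e^{it} - r) - t with t = x - m; the atan form is valid since
   1 - r cos t > 0. *)
Definition wc_angle (r m x : R) : R :=
  (x - m) + 2 * atan (r * sin (x - m) / (1 - r * cos (x - m))).

Lemma wc_angle_PI r m : wc_angle r m PI - wc_angle r m (- PI) = 2 * PI.
Proof. unfold wc_angle; rewrite sin_neg_PI_sub, cos_neg_PI_sub; ring. Qed.

Lemma is_derive_wc_angle r m x : 0 <= r < 1 ->
  is_derive (wc_angle r m) x ((1 - r ^ 2) / wc_den r m x).
Proof.
  intros Hr.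
  pose proof (one_sub_mul_cos_pos r (x - m) Hr).
  pose proof (wc_den_pos r m x Hr).
  pose proof (sin_pow2_add_cos_pow2 (x - m)).
  unfold wc_angle, wc_den in *.
  auto_derive; replace (x + - m) with (x - m) by ring; [lra |].
  set (c := cos (x - m)) in *; set (s := sin (x - m)) in *; clearbody c s.
  assert (0 < 1 + (r * s / (1 - r * c)) ^ 2)
    by (pose proof (pow2_ge_0 (r * s / (1 - r * c))); lra).
  field_simplify_eq; [replace (s ^ 2) with (1 - c ^ 2) by lra; ring |].
  repeat split; nra.
Qed.

Lemma is_derive_ln_wc_den r m x : 0 <= r < 1 ->
  is_derive (fun y => ln (wc_den r m y)) x (2 * r * sin (x - m) / wc_den r m x).
Proof.
  intros Hr; pose proof (wc_den_pos r m x Hr); unfold wc_den in *.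
  auto_derive; replace (x + - m) with (x - m) by ring; [lra | field; lra].
Qed.

Lemma is_derive_sin_div_wc_den r m x : 0 <= r < 1 ->
  is_derive (fun y => sin (y - m) / wc_den r m y) x
    (((1 + r ^ 2) * cos (x - m) - 2 * r) / wc_den r m x ^ 2).
Proof.
  intros Hr; pose proof (wc_den_pos r m x Hr).
  pose proof (sin_pow2_add_cos_pow2 (x - m)).
  unfold wc_den in *.
  auto_derive; replace (x + - m) with (x - m) by ring; [lra |].
  set (c := cos (x - m)) in *; set (s := sin (x - m)) in *; clearbody c s.
  field_simplify_eq; [replace (s ^ 2) with (1 - c ^ 2) by lra; ring | lra].
Qed.

Lemma is_RInt_of_primitive (F f : R -> R) (a b : R) :
  (forall x, is_derive F x (f x)) -> (forall x, continuous f x) ->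
  is_RInt f a b (F b - F a).
Proof. intros HF Hf; apply (is_RInt_derive F f); auto. Qed.

Lemma is_RInt_ext_R (f g : R -> R) (a b l : R) :
  (forall x, f x = g x) -> is_RInt f a b l -> is_RInt g a b l.
Proof. intros Hfg Hf; apply is_RInt_ext with f; auto. Qed.

Lemma is_RInt_lin_comb (f g : R -> R) (a b k l If Ig : R) :
  is_RInt f a b If -> is_RInt g a b Ig ->
  is_RInt (fun x => k * f x + l * g x) a b (k * If + l * Ig).
Proof.
  intros Hf Hg.
  apply (is_RInt_plus (V := R_NormedModule) (fun x => k * f x) (fun x => l * g x));
    apply (is_RInt_scal (V := R_NormedModule)); assumption.
Qed.

Lemma continuous_div_wc_den_pow (g : R -> R) r m n x : 0 <= r < 1 ->
  ex_derive g x -> continuous (fun y => g y / wc_den r m y ^ n) x.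
Proof.
  intros Hr Hg; apply (ex_derive_continuous (V := R_NormedModule)).
  pose proof (wc_den_pos r m x Hr); unfold wc_den in *.
  auto_derive; repeat split; [exact Hg |].
  replace (x + - m) with (x - m) by ring; apply pow_nonzero; lra.
Qed.

Lemma is_RInt_poisson r m : 0 <= r < 1 ->
  is_RInt (fun x => (1 - r ^ 2) / wc_den r m x) (- PI) PI (2 * PI).
Proof.
  intros Hr; rewrite <- (wc_angle_PI r m).
  apply is_RInt_of_primitive; intros x; [exact (is_derive_wc_angle r m x Hr) |].
  apply continuous_ext with (fun y => (1 - r ^ 2) / wc_den r m y ^ 1).
  - intros y; rewrite pow_1; reflexivity.
  - apply continuous_div_wc_den_pow; [exact Hr | auto_derive; exact I].
Qed.

Lemma is_RInt_conj_poisson r m : 0 <= r < 1 ->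
  is_RInt (fun x => 2 * r * sin (x - m) / wc_den r m x) (- PI) PI 0.
Proof.
  intros Hr.
  replace 0 with (ln (wc_den r m PI) - ln (wc_den r m (- PI)))
    by (rewrite (wc_den_neg_PI r m); ring).
  apply (is_RInt_of_primitive (fun y => ln (wc_den r m y))); intros x;
    [exact (is_derive_ln_wc_den r m x Hr) |].
  apply continuous_ext with (fun y => 2 * r * sin (y - m) / wc_den r m y ^ 1).
  - intros y; rewrite pow_1; reflexivity.
  - apply continuous_div_wc_den_pow; [exact Hr | auto_derive; exact I].
Qed.

Lemma is_RInt_deriv_sin_div_wc_den r m : 0 <= r < 1 ->
  is_RInt (fun x => ((1 + r ^ 2) * cos (x - m) - 2 * r) / wc_den r m x ^ 2) (- PI) PI 0.
Proof.
  intros Hr.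
  replace 0 with (sin (PI - m) / wc_den r m PI - sin (- PI - m) / wc_den r m (- PI))
    by (rewrite (wc_den_neg_PI r m), sin_neg_PI_sub; ring).
  apply (is_RInt_of_primitive (fun y => sin (y - m) / wc_den r m y)); intros x;
    [exact (is_derive_sin_div_wc_den r m x Hr) |].
  apply continuous_div_wc_den_pow; [exact Hr | auto_derive; exact I].
Qed.

Lemma is_RInt_inv_wc_den r m : 0 <= r < 1 ->
  is_RInt (fun x => / wc_den r m x) (- PI) PI (2 * PI / (1 - r ^ 2)).
Proof.
  intros Hr; assert (0 < 1 - r ^ 2) by nra.
  apply is_RInt_ext_R with (fun x => / (1 - r ^ 2) * ((1 - r ^ 2) / wc_den r m x)).
  { intros x; pose proof (wc_den_pos r m x Hr); field; split; lra. }
  replace (2 * PI / (1 - r ^ 2)) with (/ (1 - r ^ 2) * (2 * PI)) by (field; lra).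
  apply (is_RInt_scal (V := R_NormedModule)), is_RInt_poisson; exact Hr.
Qed.

Lemma is_RInt_inv_wc_den_pow2 r m : 0 <= r < 1 ->
  is_RInt (fun x => / wc_den r m x ^ 2) (- PI) PI (2 * PI * (1 + r ^ 2) / (1 - r ^ 2) ^ 3).
Proof.
  intros Hr; assert (0 < 1 - r ^ 2) by nra.
  apply is_RInt_ext_R with (fun x =>
    2 * r / (1 - r ^ 2) ^ 2 * (((1 + r ^ 2) * cos (x - m) - 2 * r) / wc_den r m x ^ 2)
    + (1 + r ^ 2) / (1 - r ^ 2) ^ 2 * / wc_den r m x).
  { intros x; pose proof (wc_den_pos r m x Hr); unfold wc_den in *; field; lra. }
  replace (2 * PI * (1 + r ^ 2) / (1 - r ^ 2) ^ 3)
    with (2 * r / (1 - r ^ 2) ^ 2 * 0 + (1 + r ^ 2) / (1 - r ^ 2) ^ 2 * (2 * PI / (1 - r ^ 2)))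
    by (field; lra).
  apply is_RInt_lin_comb;
    [apply is_RInt_deriv_sin_div_wc_den | apply is_RInt_inv_wc_den]; exact Hr.
Qed.

Lemma wc_den_partial_fractions r1 m1 r2 m2 x :
  (r1 ^ 2 + r2 ^ 2 - 2 * r1 * r2 * cos (m1 - m2))
    * (1 + r1 ^ 2 * r2 ^ 2 - 2 * r1 * r2 * cos (m1 - m2))
  = (r1 ^ 2 * (1 + r2 ^ 2) - r1 * r2 * cos (m1 - m2) * (1 + r1 ^ 2)
       - 2 * r1 * (r1 * r2 * sin (m1 - m2)) * sin (x - m1)) * wc_den r2 m2 x
  + (r2 ^ 2 * (1 + r1 ^ 2) - r1 * r2 * cos (m1 - m2) * (1 + r2 ^ 2)
       + 2 * r2 * (r1 * r2 * sin (m1 - m2)) * sin (x - m2)) * wc_den r1 m1 x.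
Proof.
  unfold wc_den.
  replace (x - m1) with ((x - m2) - (m1 - m2)) by ring.
  rewrite (sin_minus (x - m2) (m1 - m2)), (cos_minus (x - m2) (m1 - m2)).
  pose proof (sin_pow2_add_cos_pow2 (x - m2)) as Hu.
  pose proof (sin_pow2_add_cos_pow2 (m1 - m2)) as Hd.
  set (cu := cos (x - m2)) in *; set (su := sin (x - m2)) in *.
  set (cd := cos (m1 - m2)) in *; set (sd := sin (m1 - m2)) in *.
  ring_simplify.
  replace (su ^ 2) with (1 - cu ^ 2) by lra; replace (sd ^ 2) with (1 - cd ^ 2) by lra; ring.
Qed.

Lemma centre_dist_eq r1 m1 r2 m2 :
  r1 ^ 2 + r2 ^ 2 - 2 * r1 * r2 * cos (m1 - m2)
  = (r1 * cos m1 - r2 * cos m2) ^ 2 + (r1 * sin m1 - r2 * sin m2) ^ 2.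
Proof.
  rewrite cos_minus.
  transitivity (r1 ^ 2 * (sin m1 ^ 2 + cos m1 ^ 2) + r2 ^ 2 * (sin m2 ^ 2 + cos m2 ^ 2)
                 - 2 * r1 * r2 * (cos m1 * cos m2 + sin m1 * sin m2)).
  - rewrite !sin_pow2_add_cos_pow2; ring.
  - ring.
Qed.

Lemma wc_den_expand r m x :
  wc_den r m x = 1 + r ^ 2 - 2 * (r * cos m * cos x + r * sin m * sin x).
Proof. unfold wc_den; rewrite cos_minus; ring. Qed.

(* wc_den r m depends only on the point r e^{im}, and E is the squared distance of the two points. *)
Lemma wc_den_eq_of_centre_dist_eq0 r1 m1 r2 m2 : 0 <= r1 -> 0 <= r2 ->
  r1 ^ 2 + r2 ^ 2 - 2 * r1 * r2 * cos (m1 - m2) = 0 ->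
  r1 = r2 /\ forall x, wc_den r1 m1 x = wc_den r2 m2 x.
Proof.
  intros Hr1 Hr2 HE; rewrite centre_dist_eq in HE.
  pose proof (pow2_ge_0 (r1 * cos m1 - r2 * cos m2)).
  pose proof (pow2_ge_0 (r1 * sin m1 - r2 * sin m2)).
  assert (Hc : r1 * cos m1 = r2 * cos m2) by nra.
  assert (Hs : r1 * sin m1 = r2 * sin m2) by nra.
  assert (Hnorm : forall r m, (r * sin m) ^ 2 + (r * cos m) ^ 2 = r ^ 2).
  { intros r m; rewrite <- (Rmult_1_r (r ^ 2)), <- (sin_pow2_add_cos_pow2 m); ring. }
  assert (Hr : r1 ^ 2 = r2 ^ 2)
    by (rewrite <- (Hnorm r1 m1), <- (Hnorm r2 m2), Hc, Hs; reflexivity).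
  split; [nra |].
  intros x; rewrite !wc_den_expand, Hc, Hs, Hr; reflexivity.
Qed.

Lemma cross_den_pos r1 r2 t : 0 <= r1 < 1 -> 0 <= r2 < 1 ->
  0 < 1 + r1 ^ 2 * r2 ^ 2 - 2 * r1 * r2 * cos t.
Proof.
  intros Hr1 Hr2.
  replace (1 + r1 ^ 2 * r2 ^ 2 - 2 * r1 * r2 * cos t) with (wc_den (r1 * r2) 0 t)
    by (unfold wc_den; rewrite Rminus_0_r; ring).
  apply wc_den_pos; nra.
Qed.

Lemma is_RInt_inv_wc_den_mul_distinct r1 m1 r2 m2 : 0 <= r1 < 1 -> 0 <= r2 < 1 ->
  r1 ^ 2 + r2 ^ 2 - 2 * r1 * r2 * cos (m1 - m2) <> 0 ->
  is_RInt (fun x => / (wc_den r1 m1 x * wc_den r2 m2 x)) (- PI) PI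
    (2 * PI * (1 - r1 ^ 2 * r2 ^ 2)
     / ((1 - r1 ^ 2) * (1 - r2 ^ 2) * (1 + r1 ^ 2 * r2 ^ 2 - 2 * r1 * r2 * cos (m1 - m2)))).
Proof.
  intros Hr1 Hr2 HE.
  pose proof (cross_den_pos r1 r2 (m1 - m2) Hr1 Hr2) as HD.
  pose proof (wc_den_partial_fractions r1 m1 r2 m2) as Hpf.
  set (E := r1 ^ 2 + r2 ^ 2 - 2 * r1 * r2 * cos (m1 - m2)) in *.
  set (D := 1 + r1 ^ 2 * r2 ^ 2 - 2 * r1 * r2 * cos (m1 - m2)) in *.
  set (X1 := r1 ^ 2 * (1 + r2 ^ 2) - r1 * r2 * cos (m1 - m2) * (1 + r1 ^ 2)) in *.
  set (X2 := r2 ^ 2 * (1 + r1 ^ 2) - r1 * r2 * cos (m1 - m2) * (1 + r2 ^ 2)) in *.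
  set (Y := r1 * r2 * sin (m1 - m2)) in *.
  assert (HX : X1 * (1 - r2 ^ 2) + X2 * (1 - r1 ^ 2) = (1 - r1 ^ 2 * r2 ^ 2) * E)
    by (unfold X1, X2, E; ring).
  assert (0 < 1 - r1 ^ 2) by nra; assert (0 < 1 - r2 ^ 2) by nra.
  clearbody E D X1 X2 Y.
  apply is_RInt_ext_R with (fun x => / (E * D) *
    ((X1 * / wc_den r1 m1 x + - Y * (2 * r1 * sin (x - m1) / wc_den r1 m1 x))
     + (X2 * / wc_den r2 m2 x + Y * (2 * r2 * sin (x - m2) / wc_den r2 m2 x)))).
  { intros x; pose proof (wc_den_pos r1 m1 x Hr1); pose proof (wc_den_pos r2 m2 x Hr2).
    transitivity (((X1 - 2 * r1 * Y * sin (x - m1)) * wc_den r2 m2 x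
                   + (X2 + 2 * r2 * Y * sin (x - m2)) * wc_den r1 m1 x)
                  / (E * D * wc_den r1 m1 x * wc_den r2 m2 x)).
    - field; repeat split; try assumption; lra.
    - rewrite <- (Hpf x); field; repeat split; try assumption; lra. }
  replace (2 * PI * (1 - r1 ^ 2 * r2 ^ 2) / ((1 - r1 ^ 2) * (1 - r2 ^ 2) * D))
    with (/ (E * D) * ((X1 * (2 * PI / (1 - r1 ^ 2)) + - Y * 0)
                       + (X2 * (2 * PI / (1 - r2 ^ 2)) + Y * 0))).
  2: { transitivity (/ (E * D) * (2 * PI * (X1 * (1 - r2 ^ 2) + X2 * (1 - r1 ^ 2))
                                   / ((1 - r1 ^ 2) * (1 - r2 ^ 2)))).
       - field; repeat split; try assumption; lra.
       - rewrite HX; field; repeat split; try assumption; lra. }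
  apply (is_RInt_scal (V := R_NormedModule)), (is_RInt_plus (V := R_NormedModule));
    apply is_RInt_lin_comb;
    auto using is_RInt_inv_wc_den, is_RInt_conj_poisson.
Qed.

Lemma is_RInt_inv_wc_den_mul r1 m1 r2 m2 : 0 <= r1 < 1 -> 0 <= r2 < 1 ->
  is_RInt (fun x => / (wc_den r1 m1 x * wc_den r2 m2 x)) (- PI) PI
    (2 * PI * (1 - r1 ^ 2 * r2 ^ 2)
     / ((1 - r1 ^ 2) * (1 - r2 ^ 2) * (1 + r1 ^ 2 * r2 ^ 2 - 2 * r1 * r2 * cos (m1 - m2)))).
Proof.
  intros Hr1 Hr2.
  destruct (Req_dec (r1 ^ 2 + r2 ^ 2 - 2 * r1 * r2 * cos (m1 - m2)) 0) as [HE | HE];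
    [| apply is_RInt_inv_wc_den_mul_distinct; assumption].
  destruct (wc_den_eq_of_centre_dist_eq0 r1 m1 r2 m2) as [<- Hden]; try tauto.
  assert (0 < 1 - r1 ^ 2) by nra.
  replace (1 + r1 ^ 2 * r1 ^ 2 - 2 * r1 * r1 * cos (m1 - m2)) with ((1 - r1 ^ 2) ^ 2) by nra.
  replace (2 * PI * (1 - r1 ^ 2 * r1 ^ 2) / ((1 - r1 ^ 2) * (1 - r1 ^ 2) * (1 - r1 ^ 2) ^ 2))
    with (2 * PI * (1 + r1 ^ 2) / (1 - r1 ^ 2) ^ 3) by (field; lra).
  apply is_RInt_ext_R with (fun x => / wc_den r1 m2 x ^ 2).
  - intros x; rewrite Hden; f_equal; ring.
  - apply is_RInt_inv_wc_den_pow2; exact Hr1.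
Qed.

Lemma wc_likelihood_prior_eq r1 m1 r2 m2 nu :
  wc_density nu r1 m1 * wc_density m2 r2 nu
  = (1 - r1 ^ 2) * (1 - r2 ^ 2) / (2 * PI) ^ 2 * / (wc_den r1 m1 nu * wc_den r2 m2 nu).
Proof. rewrite !wc_density_eq, (wc_den_sym r1 nu m1); unfold Rdiv; rewrite <- pow_inv, !Rinv_mult; ring. Qed.

Theorem theorem7 (rho1 mu2 rho2 mu1 nu : R)
  (Hrho1 : 0 <= rho1 < 1) (Hmu2 : - PI <= mu2 < PI) (Hrho2 : 0 <= rho2 < 1)
  (Hmu1 : - PI <= mu1 < PI) (Hnu : - PI <= nu < PI) :
  wc_posterior_density rho1 mu2 rho2 mu1 nu =
  ((1 - rho1 ^ 2) * (1 - rho2 ^ 2)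
     * (1 + rho1 ^ 2 * rho2 ^ 2 - 2 * rho1 * rho2 * cos (mu1 - mu2))
   / (2 * PI * (1 - rho1 ^ 2 * rho2 ^ 2)))
  * / ((1 + rho1 ^ 2 - 2 * rho1 * cos (nu - mu1))
       * (1 + rho2 ^ 2 - 2 * rho2 * cos (nu - mu2))).
Proof.
  pose proof (is_RInt_inv_wc_den_mul rho1 mu1 rho2 mu2 Hrho1 Hrho2) as HI.
  set (K := (1 - rho1 ^ 2) * (1 - rho2 ^ 2) / (2 * PI) ^ 2).
  assert (Hjoint : is_RInt (fun v => wc_density v rho1 mu1 * wc_density mu2 rho2 v) (- PI) PI
                     (K * (2 * PI * (1 - rho1 ^ 2 * rho2 ^ 2)
                           / ((1 - rho1 ^ 2) * (1 - rho2 ^ 2)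
                              * (1 + rho1 ^ 2 * rho2 ^ 2 - 2 * rho1 * rho2 * cos (mu1 - mu2)))))).
  { apply is_RInt_ext_R with (fun v => K * / (wc_den rho1 mu1 v * wc_den rho2 mu2 v)).
    - intros v; symmetry; apply wc_likelihood_prior_eq.
    - apply (is_RInt_scal (V := R_NormedModule)); exact HI. }
  unfold wc_posterior_density.
  rewrite (is_RInt_unique _ _ _ _ Hjoint), wc_likelihood_prior_eq.
  pose proof (wc_den_pos rho1 mu1 nu Hrho1); pose proof (wc_den_pos rho2 mu2 nu Hrho2).
  pose proof (cross_den_pos rho1 rho2 (mu1 - mu2) Hrho1 Hrho2).
  pose proof PI_RGT_0.
  assert (0 < 1 - rho1 ^ 2) by nra; assert (0 < 1 - rho2 ^ 2) by nra.
  assert (0 < 1 - rho1 ^ 2 * rho2 ^ 2) by nra.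
  unfold K, wc_den in *; field; repeat split; lra.
Qed.
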